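(* Let $\mathbb{A}_1\subseteq\cdots\subseteq\mathbb{A}_k$ be a flag of linear subspaces of $\mathbb{R}^n$, $\mathbb{B}\in\Omega(\mathbb{A}_1,\dots,\mathbb{A}_k)$ and $b\in\mathbb{R}^n$. Then the fiber \[ \tau_b^{-1}(\mathbb{B})=\{\mathbb{B}+c\in\mathrm{Graff}(k,n):\dim((\mathbb{B}+c)\cap(\mathbb{A}_j+b))\ge j,\ j=1,\dots,k\} \] is convex (under the identification of the affine subspaces with direction space $\mathbb{B}$ with the quotient vector space $\mathbb{R}^n/\mathbb{B}$ via $\mathbb{B}+c\mapsto c+\mathbb{B}$), and therefore contractible.
   Context: $\mathrm{Graff}(k,n)$ is the set of $k$-dimensional affine subspaces of $\mathbb{R}^n$. $\Omega(\mathbb{A}_1,\dots,\mathbb{A}_k)=\{\mathbb{B}\in\mathrm{Gr}(k,n):\dim(\mathbb{B}\cap\mathbb{A}_j)\ge j,\ j=1,\dots,k\}$. $\tau_b$ is the restriction of $\mathbb{A}+c\mapsto\mathbb{A}$ to the affine Schubert variety $\Psi(\mathbb{A}_1+b,\dots,\mathbb{A}_k+b)=\{\mathbb{B}+c\in\mathrm{Graff}(k,n):\dim((\mathbb{B}+c)\cap(\mathbb{A}_j+b))\ge j,\ j=1,\dots,k\}$, with values in $\Omega(\mathbb{A}_1,\dots,\mathbb{A}_k)$. *)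

(* R^n is 'rV[R]_n for R : realType (mathcomp-analysis reals). *)
From HB Require Import structures.
From mathcomp Require Import all_boot all_order all_algebra.
From mathcomp Require Import reals.
Set Implicit Arguments. Unset Strict Implicit. Unset Printing Implicit Defensive.
Import Order.TTheory GRing.Theory Num.Theory.
Local Open Scope ring_scope.

(* The empty set has dimension -1 by convention, so it never
   satisfies [affine_dim_ge S m] (we only use m >= 1). *)
Definition affine_dim_ge (F : fieldType) (V : vectType F) (S : V -> Prop)
    (m : nat) : Prop :=
  exists p : V, S p /\
    exists W : {vspace V}, (forall x, S x <-> (x - p \in W)) /\ (m <= \dim W)%N.

Definition translate (F : fieldType) (V : vectType F) (U : {vspace V}) (a : V)
  : V -> Prop := fun x => x - a \in U.

Definition setI_pred (V : Type) (S T : V -> Prop) : V -> Prop :=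
  fun x => S x /\ T x.

(* The intersection (B + c) ∩ (A_j + b), when nonempty, is an affine subspace
   with direction B ∩ A_j, whose dimension is at least j by the Schubert
   condition on B.  Hence B + c lies in the fiber iff every such intersection
   is nonempty, i.e. iff c - b lies in B + A_j for all j.  The fiber is thus
   the translate by b of the linear subspace ⋂_j (B + A_j), which is closed
   under all affine combinations. *)

From HB Require Import structures.
From mathcomp Require Import all_boot all_order all_algebra.
From mathcomp Require Import reals.
Set Implicit Arguments. Unset Strict Implicit. Unset Printing Implicit Defensive.
Import Order.TTheory GRing.Theory Num.Theory.
Local Open Scope ring_scope.

Section AffineTranslates.

Variables (F : fieldType) (V : vectType F).

Lemma translateI_affine_dim_ge (B A : {vspace V}) (c b p : V) (m : nat) :
    setI_pred (translate B c) (translate A b) p -> (m <= \dim (B :&: A))%N ->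
  affine_dim_ge (setI_pred (translate B c) (translate A b)) m.
Proof.
move=> [pBc pAb] dimBA; exists p; split=> //; exists (B :&: A)%VS.
split=> // x; rewrite memv_cap /setI_pred /translate.
have xpE (a : V) : x - p = (x - a) - (p - a) by rewrite opprB addrA subrK.
have xaE (a : V) : x - a = (x - p) + (p - a) by rewrite addrA subrK.
split=> [[xBc xAb] | /andP[xpB xpA]].
- by apply/andP; split; [rewrite (xpE c) | rewrite (xpE b)]; rewrite rpredB.
- by split; [rewrite (xaE c) | rewrite (xaE b)]; rewrite rpredD.
Qed.

Lemma affine_dim_ge_translateI (B A : {vspace V}) (c b : V) (m : nat) :
    (m <= \dim (B :&: A))%N ->
  affine_dim_ge (setI_pred (translate B c) (translate A b)) m <->
  translate (B + A)%VS b c.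
Proof.
move=> dimBA; rewrite /translate; split.
- move=> [p [[pBc pAb] _]].
  have -> : c - b = - (p - c) + (p - b) by rewrite opprB addrA subrK.
  by rewrite memv_add ?rpredN.
- case/memv_addP=> u uB [v vA cbE].
  apply: (translateI_affine_dim_ge (p := c - u)) => //.
  split; rewrite /translate; first by rewrite addrAC subrr add0r rpredN.
  by rewrite addrAC cbE addrC addKr.
Qed.

Lemma translate_affine_comb (U : {vspace V}) (a x y : V) (t : F) :
  translate U a x -> translate U a y -> translate U a ((1 - t) *: x + t *: y).
Proof.
rewrite /translate => xU yU.
have -> : (1 - t) *: x + t *: y - a = (1 - t) *: (x - a) + t *: (y - a).
  by rewrite !scalerBr addrACA -opprD -scalerDl subrK scale1r.
by rewrite rpredD ?rpredZ.
Qed.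

End AffineTranslates.

Theorem lemma7p5 (R : realType) (n k : nat)
    (A : 'I_k -> {vspace 'rV[R]_n})
    (Aflag : forall i j : 'I_k, (i <= j)%N -> (A i <= A j)%VS)
    (B : {vspace 'rV[R]_n})
    (dimB : \dim B = k)
    (BOmega : forall j : 'I_k, (j.+1 <= \dim (B :&: A j))%N)
    (b : 'rV[R]_n) :
  let fiber := fun c : 'rV[R]_n =>
    forall j : 'I_k,
      affine_dim_ge (setI_pred (translate B c) (translate (A j) b)) j.+1 in
  (* nonempty *)
  (exists c, fiber c) /\
  (* convex (as a set of representatives c of the cosets c + B) *)
  (forall (c1 c2 : 'rV[R]_n) (t : R), fiber c1 -> fiber c2 ->
     0 <= t -> t <= 1 -> fiber ((1 - t) *: c1 + t *: c2)).
Proof.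
move=> fiber.
have fiberE c : fiber c <-> forall j, translate (B + A j)%VS b c.
  by split=> fc j; apply (affine_dim_ge_translateI _ _ (BOmega j)); apply: fc.
split.
  by exists b; apply/fiberE => j; rewrite /translate subrr rpred0.
move=> c1 c2 t /fiberE fc1 /fiberE fc2 _ _; apply/fiberE => j.
exact: translate_affine_comb.
Qed.
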